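(* Let $K$ be an integral domain (not necessarily Noetherian) and $X$ a set. No proper non-zero ideal $I$ of the free $K$-algebra $K\langle X\rangle$ is free as a $K$-algebra, i.e. there is no set $Y$ with $I\cong K\langle Y\rangle$ as $K$-algebras.
   Context: The free $K$-algebra $K\langle X\rangle$ is the semigroup ring over $K$ of the free semigroup $X^+$ (polynomials in non-commuting variables without constant term; no identity). Integral domains are commutative with $1$. *)

From Stdlib Require List.
From HB Require Import structures.
From mathcomp Require Import all_boot all_order all_algebra.
Set Implicit Arguments. Unset Strict Implicit. Unset Printing Implicit Defensive.
Import GRing.Theory.
Local Open Scope ring_scope.

(* The free (non-unital) K-algebra K<X>: elements are coefficient functions
   f : seq X -> K on words, with f [::] = 0 (no constant term, i.e. supported on
   the free semigroup X^+) and finite support. *)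
Section FreeAlg.
Variables (K : idomainType) (X : Type).

Definition isFA (f : seq X -> K) : Prop :=
  f [::] = 0 /\ exists s : seq (seq X), forall w, f w <> 0 -> List.In w s.

Definition fa_zero : seq X -> K := fun _ => 0.
Definition fa_add (f g : seq X -> K) : seq X -> K := fun w => f w + g w.
Definition fa_scale (c : K) (f : seq X -> K) : seq X -> K := fun w => c * f w.
Definition fa_mul (f g : seq X -> K) : seq X -> K :=
  fun w => \sum_(1 <= i < size w) f (take i w) * g (drop i w).

Definition is_ideal (I : (seq X -> K) -> Prop) : Prop :=
  [/\ forall f, I f -> isFA f,
      I fa_zero,
      forall f g, I f -> I g -> I (fa_add f g),
      forall c f, I f -> I (fa_scale c f)
    & forall f g, isFA g -> I f -> I (fa_mul g f) /\ I (fa_mul f g)].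

End FreeAlg.

Definition fa_iso (K : idomainType) (X Y : Type)
  (I : (seq X -> K) -> Prop) (phi : (seq Y -> K) -> (seq X -> K)) : Prop :=
  [/\ forall f, isFA f -> I (phi f),
      forall g, I g -> exists2 f, isFA f & phi f = g,
      forall f1 f2, isFA f1 -> isFA f2 -> phi f1 = phi f2 -> f1 = f2
    & [/\ forall f1 f2, isFA f1 -> isFA f2 -> phi (fa_add f1 f2) = fa_add (phi f1) (phi f2),
      forall c f, isFA f -> phi (fa_scale c f) = fa_scale c (phi f)
    & forall f1 f2, isFA f1 -> isFA f2 -> phi (fa_mul f1 f2) = fa_mul (phi f1) (phi f2)]].

(* Let phi : K<Y> -> I be an isomorphism onto a non-zero ideal I, let y be a letter of Y
   and a = phi y.  For any g in K<X>, write g a = phi S and a g = phi T; then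
   y S = T y in K<Y>, and comparing coefficients forces S = c y + Q y with c in K and
   Q = y^-1 T.  Hence (g - phi Q) a = c a.  Since K is a domain, multiplying the longest
   words of the supports shows that D a = c a with a <> 0 forces D = 0 (the algebra has
   no constant terms), so g = phi Q lies in I, and I cannot be proper. *)
From HB Require Import structures.
From mathcomp Require Import all_boot all_order all_algebra.
From mathcomp Require Import zify.
From Stdlib Require Import Classical ClassicalEpsilon FunctionalExtensionality.
Set Implicit Arguments. Unset Strict Implicit. Unset Printing Implicit Defensive.
Import GRing.Theory.
Local Open Scope ring_scope.

Lemma exchange_big_nat_triangle (R : nmodType) (F : nat -> nat -> R) n :
  \sum_(1 <= i < n) \sum_(i.+1 <= k < n) F i k =
  \sum_(1 <= k < n) \sum_(1 <= i < k) F i k.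
Proof.
elim: n => [|n IH]; first by rewrite !big_geq.
case: n IH => [|n] IH; first by rewrite !big_geq.
rewrite big_nat_recr //= [in RHS]big_nat_recr //= -IH.
rewrite [X in _ + X]big_geq // addr0 -big_split /=.
by apply: eq_big_nat => i /andP[_ lt_in]; rewrite big_nat_recr.
Qed.

Lemma ex_maximal_In (T : Type) (F : T -> nat) (P : T -> Prop) (s : list T) :
  (forall x, P x -> List.In x s) -> (exists x, P x) ->
  exists x, P x /\ forall y, P y -> (F y <= F x)%N.
Proof.
move=> Ps [x0 Px0]; apply: NNPP => no_max.
have le_max x : List.In x s -> (F x <= \max_(z <- s) F z)%N.
  elim: s {Ps} => [|z s IHs] //= [<-|/IHs le_x]; rewrite big_cons leq_max ?leqnn //.
  by rewrite le_x orbT.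
have unbounded k : exists x, P x /\ (k <= F x)%N.
  elim: k => [|k [x [Px le_kx]]]; first by exists x0.
  have [y [Py lt_xy]] : exists y, P y /\ (F x < F y)%N.
    apply: NNPP => no_y; apply: no_max; exists x; split=> // y Py.
    by rewrite leqNgt; apply/negP => lt_xy; apply: no_y; exists y.
  by exists y; split=> //; apply: leq_ltn_trans lt_xy.
have [x [Px]] := unbounded (\max_(z <- s) F z).+1.
by rewrite ltnNge le_max //; apply: Ps.
Qed.

Section FreeAlgebra.
Variables (K : idomainType) (X : Type).
Implicit Types (f g h : seq X -> K) (u v w : seq X).

Definition fa_letter (x : X) : seq X -> K :=
  fun w => if excluded_middle_informative (w = [:: x]) then 1 else 0.

Definition fa_lquot (x : X) f : seq X -> K :=
  fun w => if w is [::] then 0 else f (x :: w).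

Lemma isFA_zero : isFA (@fa_zero K X).
Proof. by split=> //; exists [::]. Qed.

Lemma isFA_add f g : isFA f -> isFA g -> isFA (fa_add f g).
Proof.
move=> [f0 [sf Hf]] [g0 [sg Hg]]; split; first by rewrite /fa_add f0 g0 addr0.
exists (sf ++ sg) => w fgw; apply: List.in_or_app.
case: (f w =P 0) => [fw|/Hf]; last by left.
by right; apply: Hg => gw; apply: fgw; rewrite /fa_add fw gw addr0.
Qed.

Lemma isFA_scale c f : isFA f -> isFA (fa_scale c f).
Proof.
move=> [f0 [sf Hf]]; split; first by rewrite /fa_scale f0 mulr0.
by exists sf => w cfw; apply: Hf => fw; apply: cfw; rewrite /fa_scale fw mulr0.
Qed.

Lemma fa_mul_neq0 f g w :
  fa_mul f g w != 0 -> exists2 i, f (take i w) != 0 & g (drop i w) != 0.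
Proof.
move=> /eqP fgw; apply: NNPP => no_i; apply: fgw; rewrite /fa_mul big1 // => i _.
case: (f (take i w) =P 0) => [->|/eqP fi]; first by rewrite mul0r.
by case: (g (drop i w) =P 0) => [->|/eqP gi]; [rewrite mulr0 | case: no_i; exists i].
Qed.

Lemma isFA_mul f g : isFA f -> isFA g -> isFA (fa_mul f g).
Proof.
move=> [_ [sf Hf]] [_ [sg Hg]]; split; first by rewrite /fa_mul big_geq.
exists (List.flat_map (fun u => List.map (cat u) sg) sf) => w /eqP.
case/fa_mul_neq0=> i /eqP fi /eqP gi; rewrite -(cat_take_drop i w).
by apply/List.in_flat_map; exists (take i w); split; [apply: Hf | apply/List.in_map/Hg].
Qed.

Lemma fa_letter_self x : fa_letter x [:: x] = 1.
Proof. by rewrite /fa_letter; case: excluded_middle_informative. Qed.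

Lemma fa_letter_supp x w : fa_letter x w != 0 -> w = [:: x].
Proof.
by rewrite /fa_letter; case: excluded_middle_informative => [wx _|_] //=; rewrite eqxx.
Qed.

Lemma isFA_letter x : isFA (fa_letter x).
Proof.
split; first by case: (fa_letter x [::] =P 0) => // /eqP /fa_letter_supp.
by exists [:: [:: x]] => w /eqP /fa_letter_supp ->; left.
Qed.

Lemma isFA_lquot x f : isFA f -> isFA (fa_lquot x f).
Proof.
move=> [_ [sf Hf]]; split=> //; exists (List.map behead sf).
by case=> [|z w] //= fw; apply: (List.in_map behead _ (x :: z :: w)); apply: Hf.
Qed.

Lemma fa_mulA f g h : fa_mul f (fa_mul g h) = fa_mul (fa_mul f g) h.
Proof.
apply: functional_extensionality => w; rewrite /fa_mul; set n := size w.
transitivity (\sum_(1 <= i < n) \sum_(i.+1 <= k < n)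
                 f (take i w) * (g (drop i (take k w)) * h (drop k w))).
  apply: eq_big_nat => i _.
  rewrite mulr_sumr size_drop -/n -[i.+1]add1n big_addn.
  by apply: eq_big_nat => j _; rewrite take_drop drop_drop.
rewrite exchange_big_nat_triangle; apply: eq_big_nat => k /andP[_ lt_kn].
rewrite mulr_suml size_take -/n lt_kn; apply: eq_big_nat => i /andP[_ lt_ik].
by rewrite take_takel ?(ltnW lt_ik) // mulrA.
Qed.

Lemma fa_mulDl f g h : fa_mul (fa_add f g) h = fa_add (fa_mul f h) (fa_mul g h).
Proof.
apply: functional_extensionality => w.
by rewrite /fa_mul /fa_add -big_split; apply: eq_bigr => i _; rewrite mulrDl.
Qed.

Lemma fa_mulZl c f h : fa_mul (fa_scale c f) h = fa_scale c (fa_mul f h).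
Proof.
apply: functional_extensionality => w.
by rewrite /fa_mul /fa_scale mulr_sumr; apply: eq_bigr => i _; rewrite mulrA.
Qed.

Section LinearFactor.
Variable h : seq X -> K.
Hypothesis h_linear : forall u, h u != 0 -> size u = 1%N.

Lemma fa_mul_linear_l f z w : f [::] = 0 -> fa_mul h f (z :: w) = h [:: z] * f w.
Proof.
move=> f0; case: w => [|z' w]; first by rewrite /fa_mul big_geq // f0 mulr0.
rewrite /fa_mul big_ltn //= [X in _ + X]big1_seq ?addr0 // => i /andP[_].
rewrite mem_index_iota => /andP[lt1i _].
case: (h (take i [:: z, z' & w]) =P 0) => [->|/eqP /h_linear]; first by rewrite mul0r.
by case: i lt1i => [|[|i]].
Qed.

Lemma fa_mul_linear_r f w z : f [::] = 0 -> fa_mul f h (rcons w z) = f w * h [:: z].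
Proof.
move=> f0; case: w => [|z' w]; first by rewrite /fa_mul big_geq // f0 mul0r.
rewrite /fa_mul size_rcons big_nat_recr //= -cats1 take_size_cat // drop_size_cat //.
rewrite big1_seq ?add0r // => i /andP[_]; rewrite mem_index_iota => /andP[_ lt_iw].
case: (h (drop i ((z' :: w) ++ [:: z])) =P 0) => [->|/eqP /h_linear]; first by rewrite mulr0.
by rewrite size_drop size_cat /= addn1; lia.
Qed.

End LinearFactor.

Lemma fa_letter_linear x u : fa_letter x u != 0 -> size u = 1%N.
Proof. by move/fa_letter_supp ->. Qed.

Lemma fa_letter_intertwine x S T : isFA S -> isFA T ->
  fa_mul (fa_letter x) S = fa_mul T (fa_letter x) ->
  S = fa_add (fa_scale (T [:: x]) (fa_letter x)) (fa_mul (fa_lquot x T) (fa_letter x)).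
Proof.
move=> [S0 _] [T0 _] xS_Tx; have [x0 _] := isFA_letter x.
apply: functional_extensionality => v.
have -> : S v = fa_mul T (fa_letter x) (x :: v).
  by rewrite -xS_Tx fa_mul_linear_l ?fa_letter_self ?mul1r //; apply: fa_letter_linear.
rewrite /fa_add /fa_scale; case/lastP: v => [|v z].
  by rewrite /fa_mul !big_geq // x0 mulr0 addr0.
rewrite -rcons_cons !fa_mul_linear_r //; try exact: fa_letter_linear.
case: v => [|z' v] /=; first by rewrite mul0r addr0.
suff -> : fa_letter x (z' :: rcons v z) = 0 by rewrite mulr0 add0r.
case: (fa_letter x (z' :: rcons v z) =P 0) => // /eqP /fa_letter_linear.
by rewrite /= size_rcons.
Qed.

Lemma fa_longest_word f : isFA f -> (exists w, f w != 0) ->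
  exists u, f u != 0 /\ forall w, f w != 0 -> (size w <= size u)%N.
Proof.
move=> [_ [sf Hf]] f_neq0; apply: (@ex_maximal_In _ size _ sf _ f_neq0).
by move=> w /eqP; apply: Hf.
Qed.

Lemma fa_mul_cat_longest f g u v : (0 < size u)%N -> (0 < size v)%N ->
  (forall w, f w != 0 -> (size w <= size u)%N) ->
  (forall w, g w != 0 -> (size w <= size v)%N) ->
  fa_mul f g (u ++ v) = f u * g v.
Proof.
move=> u_gt0 v_gt0 f_le g_le; rewrite /fa_mul (bigD1_seq (size u)) /=; last first.
- exact: iota_uniq.
- by rewrite mem_index_iota size_cat; lia.
rewrite take_size_cat // drop_size_cat // big1_seq ?addr0 // => i /andP[ne_iu].
rewrite mem_index_iota size_cat => /andP[_ lt_i]; case: (ltnP i (size u)) => [lt_iu|le_ui].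
  case: (g (drop i (u ++ v)) =P 0) => [->|/eqP /g_le]; first by rewrite mulr0.
  by rewrite size_drop size_cat; lia.
case: (f (take i (u ++ v)) =P 0) => [->|/eqP /f_le]; first by rewrite mul0r.
by rewrite size_take size_cat; case: ltnP; lia.
Qed.

Lemma fa_mul_eq_scale_eq0 D a c : isFA D -> isFA a -> (exists w, a w != 0) ->
  fa_mul D a = fa_scale c a -> D = @fa_zero K X.
Proof.
move=> DFA aFA a_neq0 Da; apply: functional_extensionality => w0; apply: NNPP => /eqP Dw0.
have [u [Du u_max]] := fa_longest_word DFA (ex_intro _ w0 Dw0).
have [v [av v_max]] := fa_longest_word aFA a_neq0.
have size_gt0 f w : isFA f -> f w != 0 -> (0 < size w)%N.
  by case: w => // [[-> _]]; rewrite eqxx.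
have a_uv : a (u ++ v) = 0.
  apply: contraTeq isT => /v_max; rewrite size_cat -ltnS -subn_gt0.
  by have := size_gt0 _ _ DFA Du; lia.
have := congr1 (fun F => F (u ++ v)) Da.
rewrite /fa_scale a_uv mulr0.
rewrite (fa_mul_cat_longest (size_gt0 _ _ DFA Du) (size_gt0 _ _ aFA av) u_max v_max).
by move/eqP; rewrite mulf_eq0 (negbTE Du) (negbTE av).
Qed.

End FreeAlgebra.

Section IdealIso.
Variables (K : idomainType) (X Y : Type) (I : (seq X -> K) -> Prop).
Variable phi : (seq Y -> K) -> seq X -> K.
Hypotheses (I_ideal : is_ideal I) (phi_iso : fa_iso I phi).

Lemma fa_iso_zero : phi (@fa_zero K Y) = @fa_zero K X.
Proof.
have [_ _ _ [phiD _ _]] := phi_iso.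
have := phiD _ _ (@isFA_zero K Y) (@isFA_zero K Y).
have -> : fa_add (@fa_zero K Y) (@fa_zero K Y) = @fa_zero K Y.
  by apply: functional_extensionality => w; rewrite /fa_add addr0.
move=> phi0; apply: functional_extensionality => w.
have := congr1 (fun F => F w - phi (@fa_zero K Y) w) phi0.
by rewrite /fa_add addrK subrr.
Qed.

Lemma fa_iso_inhabited : (exists f, I f /\ f <> @fa_zero K X) -> inhabited Y.
Proof.
move=> [f [If f_neq0]]; apply: NNPP => Y_empty; apply: f_neq0.
have [_ phi_surj _ _] := phi_iso; have [F [F0 _] <-] := phi_surj _ If.
rewrite -fa_iso_zero; congr phi; apply: functional_extensionality.
by case=> [|y w] //; case: Y_empty.
Qed.

Lemma fa_iso_letter_neq0 (y : Y) : exists w, phi (fa_letter K y) w != 0.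
Proof.
apply: NNPP => phi_y0; have [_ _ phi_inj _] := phi_iso.
have /phi_inj : phi (fa_letter K y) = phi (@fa_zero K Y).
  rewrite fa_iso_zero; apply: functional_extensionality => w.
  by apply: NNPP => /eqP phi_yw; apply: phi_y0; exists w.
move/(_ (isFA_letter K y) (isFA_zero K Y))/(congr1 (fun F => F [:: y])).
by rewrite fa_letter_self /fa_zero => /eqP; rewrite oner_eq0.
Qed.

Lemma fa_iso_ideal_full (y : Y) g : isFA g -> I g.
Proof.
move=> gFA; have [phiI phi_surj phi_inj [phiD phiZ phiM]] := phi_iso.
have [I_FA _ _ _ I_mul] := I_ideal.
have yFA := isFA_letter K y; set a := phi (fa_letter K y).
have Ia : I a := phiI _ yFA.
have a_neq0 := fa_iso_letter_neq0 y.
have [S SFA phiS] := phi_surj _ (I_mul _ _ gFA Ia).1.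
have [T TFA phiT] := phi_surj _ (I_mul _ _ gFA Ia).2.
have yS_Ty : fa_mul (fa_letter K y) S = fa_mul T (fa_letter K y).
  apply: phi_inj; try exact: isFA_mul.
  by rewrite !phiM // phiS phiT fa_mulA.
set Q := fa_lquot y T; have QFA : isFA Q by apply: isFA_lquot.
have gQa : fa_mul (fa_add g (fa_scale (-1) (phi Q))) a = fa_scale (T [:: y]) a.
  rewrite fa_mulDl fa_mulZl -phiS (fa_letter_intertwine SFA TFA yS_Ty).
  rewrite phiD ?phiZ ?phiM //; try solve [exact: isFA_scale | exact: isFA_mul].
  by apply: functional_extensionality => w; rewrite /fa_add /fa_scale mulN1r addrK.
have g_eq := fa_mul_eq_scale_eq0 (isFA_add gFA (isFA_scale (-1) (I_FA _ (phiI _ QFA))))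
                                 (I_FA _ Ia) a_neq0 gQa.
suff -> : g = phi Q by apply: phiI.
apply: functional_extensionality => w; have := congr1 (fun F => F w) g_eq.
by rewrite /fa_add /fa_scale /fa_zero mulN1r => /eqP; rewrite subr_eq0 => /eqP.
Qed.

End IdealIso.

Theorem lemma6p4 (K : idomainType) (X : Type) (I : (seq X -> K) -> Prop) :
  is_ideal I ->
  (exists f, I f /\ f <> @fa_zero K X) ->
  (exists g, isFA g /\ ~ I g) ->
  ~ (exists (Y : Type) (phi : (seq Y -> K) -> (seq X -> K)), fa_iso I phi).
Proof.
move=> I_ideal I_neq0 [g [gFA gI]] [Y [phi phi_iso]].
have [y] := fa_iso_inhabited phi_iso I_neq0.
exact/gI/(fa_iso_ideal_full I_ideal phi_iso y).
Qed.
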